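(* Let $G$ be a discrete group, let $X$ and $Y$ be minimal $G$-flows with $Y$ essentially free, and let $\pi\colon X\to Y$ be a continuous surjective $G$-equivariant map. If $Y$ has the separated covering property, then so does $X$.
   Context: A $G$-flow is a compact Hausdorff space with an action of $G$ by homeomorphisms; it is minimal if every orbit is dense, and essentially free if for every $g\in G\setminus\{e\}$ the set $\{x: g\cdot x=x\}$ has empty interior. For finite $D\subseteq G$, a set $S\subseteq G$ is $D$-separated if $Dg\cap Dh=\emptyset$ for all distinct $g,h\in S$. A minimal $G$-flow $X$ has the separated covering property if for every finite $D\subseteq G$ and every non-empty open $U\subseteq X$ there exists a $D$-separated $S\subseteq G$ with $S^{-1}U=X$. *)

From Stdlib Require Import List Classical.
Import ListNotations.
Set Implicit Arguments.
Unset Strict Implicit.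

Record Group := {
  gcar :> Type;
  gmul : gcar -> gcar -> gcar;
  gone : gcar;
  ginv : gcar -> gcar;
  gmul_assoc : forall a b c, gmul a (gmul b c) = gmul (gmul a b) c;
  gmul_1l : forall a, gmul gone a = a;
  gmul_1r : forall a, gmul a gone = a;
  gmul_Vl : forall a, gmul (ginv a) a = gone;
  gmul_Vr : forall a, gmul a (ginv a) = gone
}.

Record TopSpace := {
  tcar :> Type;
  is_open : (tcar -> Prop) -> Prop;
  open_full : is_open (fun _ => True);
  open_empty : is_open (fun _ => False);
  open_union : forall (I : Type) (U : I -> tcar -> Prop),
      (forall i, is_open (U i)) -> is_open (fun x => exists i, U i x);
  open_inter : forall U V, is_open U -> is_open V -> is_open (fun x => U x /\ V x);
  open_ext : forall U V, (forall x, U x <-> V x) -> is_open U -> is_open V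
}.

Arguments is_open {t} _.
Arguments gmul {g} _ _.
Arguments gone {g}.
Arguments ginv {g} _.

Definition continuous (X Y : TopSpace) (f : X -> Y) : Prop :=
  forall V : Y -> Prop, is_open V -> is_open (fun x => V (f x)).

Definition compact (X : TopSpace) : Prop :=
  forall (I : Type) (U : I -> X -> Prop),
    (forall i, is_open (U i)) -> (forall x, exists i, U i x) ->
    exists l : list I, forall x, exists i, In i l /\ U i x.

Definition hausdorff (X : TopSpace) : Prop :=
  forall x y : X, x <> y ->
    exists U V : X -> Prop, is_open U /\ is_open V /\ U x /\ V y /\
      (forall z, ~ (U z /\ V z)).

(** * G-flows: compact Hausdorff spaces with an action of G by homeomorphisms
    (each [act g] is continuous, with continuous inverse [act (ginv g)]). *)
Record Flow (G : Group) := {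
  fsp :> TopSpace;
  act : G -> fsp -> fsp;
  act_one : forall x, act (gone) x = x;
  act_mul : forall (g h : G) x, act (gmul g h) x = act g (act h x);
  act_cont : forall g : G, continuous (act g);
  f_compact : compact fsp;
  f_hausdorff : hausdorff fsp
}.

Arguments act {G} f _ _.

Definition minimal (G : Group) (X : Flow G) : Prop :=
  forall (x : X) (U : X -> Prop), is_open U -> (exists y, U y) ->
    exists g : G, U (act X g x).

Definition essentially_free (G : Group) (X : Flow G) : Prop :=
  forall g : G, g <> gone ->
    forall U : X -> Prop, is_open U -> (forall x, U x -> act X g x = x) ->
      forall x, ~ U x.

Definition equivariant (G : Group) (X Y : Flow G) (f : X -> Y) : Prop :=
  forall (g : G) (x : X), f (act X g x) = act Y g (f x).

(** A finite D ⊆ G is given by a list.  S ⊆ G is D-separated if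
    Dg ∩ Dh = ∅ for distinct g, h ∈ S. *)
Definition separated (G : Group) (D : list G) (S : G -> Prop) : Prop :=
  forall g h : G, S g -> S h -> g <> h ->
    forall d1 d2 : G, In d1 D -> In d2 D -> gmul d1 g <> gmul d2 h.

(** S^{-1} U = X, i.e. every x lies in s^{-1} U for some s ∈ S. *)
Definition covers (G : Group) (X : Flow G) (S : G -> Prop) (U : X -> Prop) : Prop :=
  forall x : X, exists s : G, S s /\ U (act X s x).

Definition separated_covering (G : Group) (X : Flow G) : Prop :=
  forall (D : list G) (U : X -> Prop), is_open U -> (exists y, U y) ->
    exists S : G -> Prop, separated D S /\ covers S U.

(* Using essential freeness of Y (pulled back to open subsets of X through
   minimality of X) and Hausdorffness, find an open W ⊆ Y meeting π(U) with
   W ∩ gW = ∅ for every nontrivial g = d2⁻¹d1, d1, d2 ∈ D.  Minimality of X gives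
   a finite F with F⁻¹(U ∩ π⁻¹W) = X.  Choose y1 for which {f ∈ F | f y1 ∈ W} is
   maximal; it then contains {f ∈ F | f y ∈ W} for every y in a neighbourhood V
   of y1.  A (D F)-separated S' with S'⁻¹V = Y lifts to
   S = {f s | s ∈ S', f ∈ F, f y1 ∈ W}, which covers U and is D-separated since
   d1 f1 = d2 f2 with f1 y1, f2 y1 ∈ W forces f1 = f2. *)
From Stdlib Require Import List Classical.
From Stdlib Require Import ClassicalEpsilon Lia.
Import ListNotations.
Set Implicit Arguments.
Unset Strict Implicit.

Lemma bounded_nat_attains_max (B : Type) (m : B -> nat) (N : nat) (b0 : B) :
  (forall b, m b <= N) -> exists b1, forall b, m b <= m b1.
Proof.
  intro bounded.
  assert (climb : forall k b, N - m b <= k -> exists b1, forall b', m b' <= m b1).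
  { induction k as [|k IH]; intros b Hb.
    - exists b. intro b'. specialize (bounded b'). lia.
    - destruct (classic (forall b', m b' <= m b)) as [maxb|notmax]; [now exists b|].
      apply not_all_ex_not in notmax as [b' Hb'].
      apply (IH b'). specialize (bounded b). lia. }
  exact (climb _ b0 (le_n _)).
Qed.

Section MaximalProfile.
Variables (A B : Type) (Q : A -> B -> Prop).

Fixpoint count_sat (l : list A) (b : B) : nat :=
  match l with
  | [] => 0
  | a :: l' => (if excluded_middle_informative (Q a b) then 1 else 0) + count_sat l' b
  end.

Lemma count_sat_le_length l b : count_sat l b <= length l.
Proof.
  induction l; simpl; [lia|]. destruct (excluded_middle_informative _); lia.
Qed.

Lemma count_sat_mono l b1 b :
  (forall a, In a l -> Q a b1 -> Q a b) -> count_sat l b1 <= count_sat l b.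
Proof.
  induction l as [|a l IH]; intro sub; simpl; [lia|].
  specialize (IH (fun a' Ha' => sub a' (or_intror Ha'))).
  destruct (excluded_middle_informative (Q a b1)) as [q1|q1];
  destruct (excluded_middle_informative (Q a b)) as [q|q]; try lia.
  exfalso. exact (q (sub a (or_introl eq_refl) q1)).
Qed.

Lemma count_sat_sub_eq l b1 b :
  (forall a, In a l -> Q a b1 -> Q a b) -> count_sat l b <= count_sat l b1 ->
  forall a, In a l -> Q a b -> Q a b1.
Proof.
  induction l as [|a l IH]; intros sub le a' Ha' Qb; [destruct Ha'|]; simpl in le.
  pose proof (count_sat_mono (fun a' Ha' => sub a' (or_intror Ha'))) as mono.
  destruct (excluded_middle_informative (Q a b1)) as [q1|q1];
  destruct (excluded_middle_informative (Q a b)) as [q|q];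
    [| exfalso; exact (q (sub a (in_eq a l) q1)) | lia |];
    destruct Ha' as [<-|Ha']; [tauto| |tauto|];
    (apply (IH (fun a' Ha' => sub a' (or_intror Ha'))); [lia|assumption|assumption]).
Qed.

Lemma exists_maximal_profile (l : list A) (b0 : B) : exists b1, forall b,
  (forall a, In a l -> Q a b1 -> Q a b) -> forall a, In a l -> Q a b -> Q a b1.
Proof.
  destruct (bounded_nat_attains_max b0 (fun b => count_sat_le_length l b))
    as [b1 maxb1].
  exists b1. intros b sub. exact (count_sat_sub_eq sub (maxb1 b)).
Qed.
End MaximalProfile.

Section GroupFacts.
Variable G : Group.

Lemma mulKg (a b : G) : gmul (ginv a) (gmul a b) = b.
Proof. now rewrite gmul_assoc, gmul_Vl, gmul_1l. Qed.

Lemma mulKVg (a b : G) : gmul a (gmul (ginv a) b) = b.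
Proof. now rewrite gmul_assoc, gmul_Vr, gmul_1l. Qed.

Lemma mulIg (a b c : G) : gmul a c = gmul b c -> a = b.
Proof.
  intro E. rewrite <- (gmul_1r a), <- (gmul_1r b), <- (gmul_Vr c), !gmul_assoc.
  now rewrite E.
Qed.

Lemma conjg_neq1 (g h : G) : g <> gone -> gmul (ginv h) (gmul g h) <> gone.
Proof.
  intros g1 E. apply g1, (mulIg (c := h)).
  now rewrite gmul_1l, <- (mulKVg h (gmul g h)), E, gmul_1r.
Qed.

Definition list_mul (A B : list G) : list G :=
  map (fun p => gmul (fst p) (snd p)) (list_prod A B).

Definition quotients (D : list G) : list G :=
  map (fun p => gmul (ginv (snd p)) (fst p)) (list_prod D D).

Lemma in_list_mul (A B : list G) a b : In a A -> In b B -> In (gmul a b) (list_mul A B).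
Proof.
  intros Ha Hb. exact (in_map (fun p => gmul (fst p) (snd p)) _ (a, b) (in_prod _ _ _ _ Ha Hb)).
Qed.

Lemma in_quotients (D : list G) d1 d2 :
  In d1 D -> In d2 D -> In (gmul (ginv d2) d1) (quotients D).
Proof.
  intros H1 H2.
  exact (in_map (fun p => gmul (ginv (snd p)) (fst p)) _ (d1, d2) (in_prod _ _ _ _ H1 H2)).
Qed.
End GroupFacts.

Section Topology.
Variable X : TopSpace.

Lemma open_imply (P : Prop) (U : X -> Prop) : is_open U -> is_open (fun x => P -> U x).
Proof.
  intro openU. destruct (classic P) as [p|np].
  - apply (open_ext (U := U)); [tauto|exact openU].
  - apply (open_ext (U := fun _ => True)); [tauto|apply open_full].
Qed.

Lemma open_forall_in (A : Type) (l : list A) (P : A -> X -> Prop) :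
  (forall a, In a l -> is_open (P a)) -> is_open (fun x => forall a, In a l -> P a x).
Proof.
  induction l as [|a l IH]; intro openP.
  - apply (open_ext (U := fun _ => True)); [|apply open_full].
    intro x; split; [intros _ a []|auto].
  - apply (open_ext (U := fun x => P a x /\ forall b, In b l -> P b x)).
    + intro x; split.
      * intros [Pa Pl] b [<-|Hb]; auto.
      * intro H; split; auto using in_eq, in_cons.
    + apply open_inter; auto using in_eq, in_cons.
Qed.

Lemma open_neq (Y : TopSpace) (f g : X -> Y) :
  hausdorff Y -> continuous f -> continuous g -> is_open (fun x => f x <> g x).
Proof.
  intros hausY contf contg.
  set (I := {p : (Y -> Prop) * (Y -> Prop) |
              is_open (fst p) /\ is_open (snd p) /\ forall z, ~ (fst p z /\ snd p z)}).
  apply (open_ext (U := fun x => exists i : I, fst (proj1_sig i) (f x) /\ snd (proj1_sig i) (g x))).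
  - intro x; split.
    + intros [[[A B] [openA [openB disjAB]]] fgAB] E. simpl in fgAB, disjAB.
      destruct fgAB as [Afx Bgx]. apply (disjAB (g x)). rewrite <- E at 1. now split.
    + intro fg. destruct (hausY _ _ fg) as (A & B & openA & openB & Afx & Bgx & disjAB).
      now exists (exist _ (A, B) (conj openA (conj openB disjAB))).
  - apply open_union. intros [[A B] [openA [openB disjAB]]]; simpl.
    apply open_inter; [apply contf|apply contg]; assumption.
Qed.
End Topology.

Section Flows.
Variable G : Group.

Lemma actK (X : Flow G) (g : G) (x : X) : act X (ginv g) (act X g x) = x.
Proof. now rewrite <- act_mul, gmul_Vl, act_one. Qed.

Lemma minimal_finite_cover (X : Flow G) (O : X -> Prop) :
  minimal X -> is_open O -> (exists x, O x) ->
  exists H : list G, forall x, exists h, In h H /\ O (act X h x).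
Proof.
  intros minX openO neO.
  apply (f_compact (f := X) (U := fun (g : G) x => O (act X g x))).
  - intro g. exact (act_cont g openO).
  - intro x. exact (minX x O openO neO).
Qed.

Lemma essentially_free_nonfixed (Y : Flow G) (g : G) (O : Y -> Prop) :
  essentially_free Y -> g <> gone -> is_open O -> (exists y, O y) ->
  exists y, O y /\ act Y g y <> y.
Proof.
  intros freeY g1 openO [y Oy]. apply NNPP. intro allfixed.
  apply (freeY g g1 O openO) with y; [|exact Oy].
  intros z Oz. apply NNPP. intro moved. apply allfixed. now exists z.
Qed.

Lemma essentially_free_nonfixed_list (Y : Flow G) (L : list G) (O : Y -> Prop) :
  essentially_free Y -> (forall c, In c L -> c <> gone) -> is_open O -> (exists y, O y) ->
  exists y, O y /\ forall c, In c L -> act Y c y <> y.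
Proof.
  intro freeY. revert O.
  induction L as [|c L IH]; intros O nontriv openO neO.
  - destruct neO as [y Oy]. now exists y.
  - destruct (essentially_free_nonfixed freeY (nontriv c (in_eq c L)) openO neO)
      as [y1 [Oy1 moved1]].
    destruct (IH (fun y => O y /\ act Y c y <> y)) as [y [[Oy movedc] movedL]].
    + intros; apply nontriv, in_cons; assumption.
    + apply open_inter; [exact openO|].
      apply open_neq; [apply f_hausdorff|apply act_cont|exact (fun _ H => H)].
    + now exists y1.
    + exists y. split; [exact Oy|]. intros c' [<-|Hc']; auto.
Qed.

Definition translates_disjoint (Y : Flow G) (L : list G) (W : Y -> Prop) : Prop :=
  forall g, In g L -> g <> gone -> forall y, W y -> ~ W (act Y g y).

Lemma translates_disjoint_cancel (Y : Flow G) (D : list G) (W : Y -> Prop) (y : Y) d1 d2 f1 f2 :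
  translates_disjoint (quotients D) W -> In d1 D -> In d2 D ->
  W (act Y f1 y) -> W (act Y f2 y) -> gmul d1 f1 = gmul d2 f2 -> f1 = f2.
Proof.
  intros disjW Hd1 Hd2 Wf1 Wf2 E.
  assert (f2E : gmul (gmul (ginv d2) d1) f1 = f2) by now rewrite <- gmul_assoc, E, mulKg.
  destruct (classic (gmul (ginv d2) d1 = gone)) as [q1|q1].
  - now rewrite <- f2E, q1, gmul_1l.
  - exfalso. apply (disjW _ (in_quotients Hd1 Hd2) q1 _ Wf1).
    now rewrite <- act_mul, f2E.
Qed.

Definition lift_set (S' : G -> Prop) (F : list G) (P : G -> Prop) : G -> Prop :=
  fun t => exists s f, S' s /\ In f F /\ P f /\ t = gmul f s.

Lemma separated_lift (D F : list G) (S' P : G -> Prop) :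
  separated (list_mul D F) S' ->
  (forall d1 d2 f1 f2, In d1 D -> In d2 D -> P f1 -> P f2 -> gmul d1 f1 = gmul d2 f2 -> f1 = f2) ->
  separated D (lift_set S' F P).
Proof.
  intros sepS' cancelP t1 t2 (s1 & f1 & S's1 & Hf1 & Pf1 & ->) (s2 & f2 & S's2 & Hf2 & Pf2 & ->)
    neq d1 d2 Hd1 Hd2 E.
  rewrite !gmul_assoc in E.
  destruct (classic (s1 = s2)) as [<-|s12].
  - apply neq. f_equal. exact (cancelP d1 d2 f1 f2 Hd1 Hd2 Pf1 Pf2 (mulIg E)).
  - exact (sepS' s1 s2 S's1 S's2 s12 _ _ (in_list_mul Hd1 Hf1) (in_list_mul Hd2 Hf2) E).
Qed.

Lemma exists_stable_profile (Y : Flow G) (F : list G) (W : Y -> Prop) (y0 : Y) :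
  is_open W -> exists y1 (V : Y -> Prop), is_open V /\ V y1 /\
    forall y f, V y -> In f F -> W (act Y f y) -> W (act Y f y1).
Proof.
  intro openW.
  destruct (exists_maximal_profile (fun f y => W (act Y f y)) F y0) as [y1 maxy1].
  exists y1, (fun y => forall f, In f F -> W (act Y f y1) -> W (act Y f y)).
  split; [|split].
  - apply open_forall_in. intros f _. apply open_imply, act_cont, openW.
  - auto.
  - intros y f Vy. exact (maxy1 y Vy f).
Qed.

Section Factor.
Variables (X Y : Flow G) (pi : X -> Y).
Hypotheses (minX : minimal X) (freeY : essentially_free Y) (pi_cont : continuous pi)
  (pi_onto : forall y, exists x, pi x = y) (pi_equiv : equivariant pi).

Lemma factor_nonfixed (g : G) (O : X -> Prop) :
  g <> gone -> is_open O -> (exists x, O x) -> exists x, O x /\ act Y g (pi x) <> pi x.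
Proof.
  intros g1 openO neO.
  destruct (minimal_finite_cover minX openO neO) as [H coverH].
  destruct neO as [x0 _].
  (* g moves π (h x) iff h⁻¹ g h moves π x. *)
  destruct (essentially_free_nonfixed_list (L := map (fun h => gmul (ginv h) (gmul g h)) H)
              (O := fun _ => True) freeY) as [y [_ moved]].
  - intros c Hc. apply in_map_iff in Hc as [h [<- _]]. exact (conjg_neq1 (h := h) g1).
  - apply open_full.
  - now exists (pi x0).
  - destruct (pi_onto y) as [x <-]. destruct (coverH x) as [h [Hh Ohx]].
    exists (act X h x). split; [exact Ohx|]. rewrite pi_equiv. intro fixed.
    apply (moved _ (in_map (fun h => gmul (ginv h) (gmul g h)) H h Hh)).
    now rewrite !act_mul, fixed, actK.
Qed.

Lemma shrink_translate_disjoint (U : X -> Prop) (W : Y -> Prop) (g : G) :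
  is_open U -> is_open W -> (exists x, U x /\ W (pi x)) -> g <> gone ->
  exists W' : Y -> Prop, is_open W' /\ (forall y, W' y -> W y) /\
    (exists x, U x /\ W' (pi x)) /\ forall y, W' y -> ~ W' (act Y g y).
Proof.
  intros openU openW meetW g1.
  destruct (factor_nonfixed (O := fun x => U x /\ W (pi x)) g1) as [x [[Ux Wx] moved]].
  - apply open_inter; [exact openU|exact (pi_cont openW)].
  - exact meetW.
  - destruct (f_hausdorff moved) as (A & B & openA & openB & Agx & Bx & disjAB).
    exists (fun y => W y /\ B y /\ A (act Y g y)). split; [|split; [|split]].
    + apply open_inter; [exact openW|].
      apply open_inter; [exact openB|exact (act_cont g openA)].
    + tauto.
    + now exists x.
    + intros y [_ [_ Agy]] [_ [Bgy _]]. exact (disjAB _ (conj Agy Bgy)).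
Qed.

Lemma exists_translates_disjoint (U : X -> Prop) (L : list G) :
  is_open U -> (exists x, U x) ->
  exists W : Y -> Prop, is_open W /\ (exists x, U x /\ W (pi x)) /\ translates_disjoint L W.
Proof.
  intros openU [x0 Ux0]. induction L as [|g L IH].
  - exists (fun _ => True). split; [apply open_full|]. split; [now exists x0|].
    intros g [].
  - destruct IH as [W [openW [meetW disjW]]].
    destruct (classic (g = gone)) as [g1|g1].
    + exists W. split; [exact openW|]. split; [exact meetW|].
      intros g' [<-|Hg'] g'1; [contradiction|exact (disjW g' Hg' g'1)].
    + destruct (shrink_translate_disjoint openU openW meetW g1)
        as [W' [openW' [subW [meetW' disjW']]]].
      exists W'. split; [exact openW'|]. split; [exact meetW'|].
      intros g' [<-|Hg'] g'1 y W'y W'g'y; [exact (disjW' y W'y W'g'y)|].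
      exact (disjW g' Hg' g'1 y (subW y W'y) (subW _ W'g'y)).
Qed.

Lemma covers_lift (S' : G -> Prop) (F : list G) (P : G -> Prop) (U : X -> Prop)
    (V W : Y -> Prop) :
  covers S' V -> (forall y f, V y -> In f F -> W (act Y f y) -> P f) ->
  (forall x, exists f, In f F /\ U (act X f x) /\ W (pi (act X f x))) ->
  covers (lift_set S' F P) U.
Proof.
  intros covS' stable coverF x.
  destruct (covS' (pi x)) as [s [S's Vs]].
  destruct (coverF (act X s x)) as [f [Hf [Ufs Wfs]]].
  exists (gmul f s). split.
  - exists s, f. split; [exact S's|]. split; [exact Hf|]. split; [|reflexivity].
    rewrite !pi_equiv in Wfs. exact (stable _ f Vs Hf Wfs).
  - now rewrite act_mul.
Qed.
End Factor.
End Flows.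

Theorem proposition2p7 (G : Group) (X Y : Flow G) (pi : X -> Y) :
  minimal X -> minimal Y -> essentially_free Y ->
  continuous pi -> (forall y : Y, exists x : X, pi x = y) -> equivariant pi ->
  separated_covering Y -> separated_covering X.
Proof.
  intros minX _ freeY pi_cont pi_onto pi_equiv scY D U openU [x0 Ux0].
  destruct (exists_translates_disjoint minX freeY pi_cont pi_onto pi_equiv (quotients D) openU
              (ex_intro _ x0 Ux0)) as [W [openW [meetW disjW]]].
  destruct (minimal_finite_cover (O := fun x => U x /\ W (pi x)) minX) as [F coverF].
  { apply open_inter; [exact openU|exact (pi_cont _ openW)]. }
  { exact meetW. }
  destruct (exists_stable_profile F (pi x0) openW) as [y1 [V [openV [Vy1 stableV]]]].
  destruct (scY (list_mul D F) V openV (ex_intro _ y1 Vy1)) as [S' [sepS' covS']].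
  exists (lift_set S' F (fun f => W (act Y f y1))). split.
  - apply separated_lift; [exact sepS'|].
    intros d1 d2 f1 f2. exact (translates_disjoint_cancel disjW).
  - apply (covers_lift pi_equiv covS' stableV).
    intro x. destruct (coverF x) as [f [Hf [Ufx Wfx]]]. now exists f.
Qed.
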